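(* There is an absolute constant $C$ such that for every simple temporal clique on $n$ vertices and every forward fireworks cover $S^-_T$ of it (for any outcome of the arbitrary choices in the construction), $|S^-_T|\le \frac{3}{4}\binom{n}{2}+Cn$.
   Context: A simple temporal clique is a pair $\mathcal{G}=(G,\lambda)$ where $G=(V,E)$ is the complete graph on a finite set $V$ of $n$ vertices and $\lambda:E\to\mathbb{N}$ assigns to each edge a single integer label such that any two distinct edges sharing an endpoint have different labels; the label of an arc $(x,y)$ is $\lambda(\{x,y\})$. For a vertex $v$, $e^-(v)$ is the edge incident to $v$ with smallest label. Forward construction: let $E^-$ be the set of arcs $(u,v)$ with $\{u,v\}=e^-(v)$, except that if $e^-(u)=e^-(v)=\{u,v\}$ only one of the two arcs $(u,v),(v,u)$ is included (arbitrarily). Initialize $E^-_T:=E^-$. For every vertex $v$ of out-degree at least $2$ in $(V,E^-)$, let $(v,u_1),\dots,(v,u_\ell)$ be its out-arcs in $E^-$, where $(v,u_\ell)$ has the largest label; for each $i<\ell$, if $u_i$ has out-degree $0$ in $(V,E^-)$, replace $(v,u_i)$ by $(u_i,v)$ in $E^-_T$, and otherwise remove $(v,u_i)$ from $E^-_T$. An emitter is a vertex of out-degree $0$ in $(V,E^-_T)$. The forward fireworks cover is $S^-_T=\{\{u,v\}\in E:(u,v)\in E^-_T\}\cup\{\{u,v\}\in E: u \text{ is an emitter}\}$. *)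

From mathcomp Require Import all_boot all_order all_algebra.
Set Implicit Arguments. Unset Strict Implicit. Unset Printing Implicit Defensive.

Section TemporalClique.
Variable V : finType.
(* lam x y = label of the edge {x,y} (values on loops x = y are irrelevant). *)
Variable lam : V -> V -> nat.

Definition simple_temporal_clique : Prop :=
  (forall x y, lam x y = lam y x) /\
  (forall x y z, x != y -> x != z -> y != z -> lam x y != lam x z).

(* emin v u : the edge {v,u} is e^-(v), the edge at v with smallest label *)
Definition emin (v u : V) : bool :=
  (u != v) && [forall w, (w != v) && (w != u) ==> (lam v u < lam v w)].

(* Em is a valid choice of the arc set E^-: arc (u,v) is in E^- iff
   {u,v} = e^-(v), except that when e^-(u) = e^-(v) = {u,v} exactly one of
   (u,v), (v,u) is included (arbitrary choice). *)
Definition valid_Eminus (Em : rel V) : Prop :=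
  (forall u v, Em u v -> emin v u) /\
  (forall u v, emin v u -> ~~ emin u v -> Em u v) /\
  (forall u v, emin v u -> emin u v -> (Em u v (+) Em v u)).

Variable Em : rel V.

Definition outdeg (u : V) : nat := #|[set w | Em u w]|.

Definition max_out (u v : V) : bool :=
  [forall w, Em u w ==> (lam u w <= lam u v)].

Definition ET (u v : V) : bool :=
  (Em u v && ((outdeg u < 2) || max_out u v)) ||
  [&& Em v u, 2 <= outdeg v, ~~ max_out v u & outdeg u == 0].

Definition emitter (u : V) : bool := [forall w, ~~ ET u w].

Definition forward_cover : {set {set V}} :=
  [set e : {set V} | [exists u, exists v,
     [&& u != v, e == [set u; v] & ET u v || emitter u]]].

End TemporalClique.

(* Every edge of the cover is either an edge of E^- (at most one per head
   vertex, hence at most n of them) or has an emitter as an endpoint.  Each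
   emitter u receives an arc (w,u) of E^- which survives into E^-_T; since
   the out-arcs of w other than its largest one are reversed towards vertices
   of out-degree 0, two emitters cannot share w.  So at least half of the
   vertices are not emitters, and the edges with an emitter endpoint number at
   most C(n,2) - C(n/2,2) = 3/4 C(n,2) + O(n). *)

From mathcomp Require Import all_boot all_order all_algebra.
From mathcomp Require Import zify lra.
Import GRing.Theory Num.Theory.
Set Implicit Arguments. Unset Strict Implicit. Unset Printing Implicit Defensive.

Lemma bin2_sub_bin2_le n m :
  n <= (2 * m).+1 -> 4 * ('C(n, 2) - 'C(m, 2)) <= 3 * 'C(n, 2) + 2 * n.
Proof. by rewrite !bin2 => le_n_2m; nia. Qed.

Section ForwardFireworks.

Variables (V : finType) (lam : V -> V -> nat) (Em : rel V).
Hypotheses (lamP : simple_temporal_clique lam) (EmP : valid_Eminus lam Em).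

Definition non_emitters : {set V} := [set u | ~~ emitter lam Em u].

Definition edges_within (B : {set V}) : {set {set V}} :=
  [set X : {set V} | X \subset B & #|X| == 2].

Definition Em_edges : {set {set V}} :=
  [set [set p.1; p.2] | p in [set p : V * V | Em p.1 p.2]].

Lemma card_edges_within B : #|edges_within B| = 'C(#|B|, 2).
Proof. exact: cards_draws. Qed.

Lemma emin_uniq v u u' : emin lam v u -> emin lam v u' -> u = u'.
Proof.
move=> /andP[uv /forallP minu] /andP[u'v /forallP minu'].
apply/eqP; apply: contraT => neq_uu'.
have := minu u'; rewrite u'v eq_sym neq_uu' /= => lt_uu'.
have := minu' u; rewrite uv neq_uu' /= => lt_u'u.
by have := ltn_trans lt_uu' lt_u'u; rewrite ltnn.
Qed.

Lemma emin_exists v : 1 < #|V| -> exists u, emin lam v u.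
Proof.
move=> V_gt1; have [w neq_wv] : exists w, w != v.
  apply/existsP; move: V_gt1; apply: contraLR; rewrite negb_exists => /forallP eqv.
  rewrite -leqNgt -(card1 v); apply: subset_leq_card; apply/subsetP => x _.
  by rewrite inE; move: (eqv x); rewrite negbK.
have [u neq_uv minu] := arg_minnP (lam v) (neq_wv : (fun x => x != v) w).
exists u; rewrite /emin neq_uv; apply/forallP => x; apply/implyP => /andP[xv xu].
rewrite ltn_neqAle minu // andbT eq_sym.
by apply: lamP.2; rewrite // eq_sym.
Qed.

Lemma Em_head_uniq u u' v : Em u v -> Em u' v -> u = u'.
Proof. by move=> /EmP.1 minu /EmP.1; apply: emin_uniq. Qed.

Lemma outdeg_gt0 u v : Em u v -> 0 < outdeg Em u.
Proof. by move=> Euv; rewrite card_gt0; apply/set0Pn; exists v; rewrite inE. Qed.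

Lemma exists_max_out u : 0 < outdeg Em u -> exists2 v, Em u v & max_out lam Em u v.
Proof.
rewrite card_gt0 => /set0Pn[w]; rewrite inE => Euw.
have [v Euv maxv] := arg_maxnP (lam u) (Euw : Em u w).
by exists v => //; apply/forallP => x; apply/implyP; apply: maxv.
Qed.

Lemma emitter_outdeg0 u : emitter lam Em u -> outdeg Em u = 0.
Proof.
move=> emit_u; apply/eqP; rewrite -leqn0 leqNgt; apply/negP.
move=> /exists_max_out[v Euv maxv].
by move: (forallP emit_u v); rewrite /ET Euv maxv orbT.
Qed.

Lemma emitter_in_arc u : 1 < #|V| -> emitter lam Em u -> exists w, Em w u.
Proof.
move=> V_gt1 emit_u; have [w minw] := emin_exists u V_gt1.
exists w; have [minu|] := boolP (emin lam w u); last exact: EmP.2.1.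
have Euw_false : Em u w = false.
  by apply/negP => /outdeg_gt0; rewrite emitter_outdeg0.
by move: (EmP.2.2 _ _ minw minu); rewrite Euw_false addbF.
Qed.

(* Otherwise (w,u) is not the largest out-arc of w and is reversed into E^-_T. *)
Lemma emitter_in_arc_max u w :
  emitter lam Em u -> Em w u -> (outdeg Em w < 2) || max_out lam Em w u.
Proof.
move=> emit_u Ewu; move: (forallP emit_u w); rewrite /ET Ewu /= => /norP[_].
by rewrite (emitter_outdeg0 emit_u) eqxx andbT negb_and -leqNgt negbK.
Qed.

Lemma emitter_in_arc_inj u u' w :
  emitter lam Em u -> emitter lam Em u' -> Em w u -> Em w u' -> u = u'.
Proof.
move=> emit_u emit_u' Ewu Ewu'; apply/eqP; apply: contraT => neq_uu'.
case: (ltnP (outdeg Em w) 2) => [outw_lt2 | outw_ge2].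
  have : #|[set u; u']| <= outdeg Em w.
    by apply: subset_leq_card; apply/subsetP => x; rewrite !inE => /orP[] /eqP->.
  by rewrite cards2 neq_uu' => /(leq_trans outw_lt2); rewrite ltnn.
move: (emitter_in_arc_max emit_u Ewu) (emitter_in_arc_max emit_u' Ewu').
rewrite ltnNge outw_ge2 /= => /forallP maxu /forallP maxu'.
have eq_lam : lam w u = lam w u'.
  by apply/eqP; rewrite eqn_leq (implyP (maxu u')) // (implyP (maxu' u)).
have /andP[wu _] := EmP.1 _ _ Ewu; have /andP[wu' _] := EmP.1 _ _ Ewu'.
by move: (lamP.2 w u u' wu wu' neq_uu'); rewrite eq_lam eqxx.
Qed.

Lemma card_emitters_le :
  1 < #|V| -> #|[set u | emitter lam Em u]| <= #|non_emitters|.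
Proof.
move=> V_gt1; pose tail u := odflt u [pick w | Em w u].
have tailP u : emitter lam Em u -> Em (tail u) u.
  rewrite /tail => emit_u; case: pickP => [w // | noin] /=.
  by have [w Ewu] := emitter_in_arc V_gt1 emit_u; move: (noin w); rewrite Ewu.
rewrite -(@card_in_imset _ _ tail); last first.
  move=> u u'; rewrite !inE => emit_u emit_u' eq_tail.
  by apply: (emitter_in_arc_inj emit_u emit_u' (tailP u emit_u)); rewrite eq_tail tailP.
apply: subset_leq_card; apply/subsetP => x /imsetP[u]; rewrite inE => emit_u ->.
have [v Ev max_v] := exists_max_out (outdeg_gt0 (tailP u emit_u)).
by rewrite inE /emitter negb_forall; apply/existsP; exists v; rewrite /ET Ev max_v orbT.
Qed.

Lemma card_vertices_le_non_emitters : #|V| <= (2 * #|non_emitters|).+1.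
Proof.
have [V_le1 | V_gt1] := leqP #|V| 1; first by rewrite (leq_trans V_le1).
have := card_emitters_le V_gt1.
have <- : #|~: non_emitters| = #|[set u | emitter lam Em u]|.
  by apply: eq_card => x; rewrite !inE negbK.
by move: (cardsC non_emitters); lia.
Qed.

Lemma card_Em_edges : #|Em_edges| <= #|V|.
Proof.
apply: leq_trans (leq_imset_card _ _) _.
apply: (@leq_card_in _ _ snd) => [[u v] [u' v']]; rewrite !inE /= => Euv Eu'v' eq_v.
by rewrite eq_v in Euv; rewrite (Em_head_uniq Euv Eu'v') eq_v.
Qed.

Lemma ET_Em u v : ET lam Em u v -> Em u v || Em v u.
Proof. by case/orP => [/andP[-> _] | /and3P[-> _ _]]; rewrite ?orbT. Qed.

Lemma forward_cover_sub :
  forward_cover lam Em \subset Em_edges :|: (edges_within setT :\: edges_within non_emitters).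
Proof.
apply/subsetP => e; rewrite inE => /existsP[u /existsP[v /and3P[neq_uv /eqP-> ETu]]].
rewrite !inE; case/orP: ETu => [/ET_Em/orP[Euv | Evu] | emit_u].
- by apply/orP; left; apply/imsetP; exists (u, v); rewrite ?inE.
- by apply/orP; left; apply/imsetP; exists (v, u); rewrite ?inE // setUC.
- apply/orP; right; rewrite subsetT cards2 neq_uv eqxx !andbT.
  by apply/negP => /subsetP/(_ u); rewrite !inE eqxx emit_u => /(_ isT).
Qed.

Lemma card_forward_cover_le :
  #|forward_cover lam Em| <= #|V| + ('C(#|V|, 2) - 'C(#|non_emitters|, 2)).
Proof.
apply: leq_trans (subset_leq_card forward_cover_sub) _.
rewrite cardsU; apply: leq_trans (leq_subr _ _) _; apply: leq_add; first exact: card_Em_edges.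
rewrite cardsD (setIidPr _); last first.
  by apply/subsetP => X; rewrite !inE subsetT => /andP[_ ->].
by rewrite !card_edges_within cardsT.
Qed.

End ForwardFireworks.

Local Open Scope ring_scope.

Theorem theorem3 :
  exists C : rat,
    forall (V : finType) (lam : V -> V -> nat),
      simple_temporal_clique lam ->
      forall Em : rel V, valid_Eminus lam Em ->
        (#|forward_cover lam Em|%:R : rat)
          <= 3%:R / 4%:R * ('C(#|V|, 2))%:R + C * (#|V|)%:R.
Proof.
exists (3%:R / 2%:R) => V lam lamP Em EmP.
have := card_forward_cover_le EmP.
have := bin2_sub_bin2_le (card_vertices_le_non_emitters lamP EmP).
set n := #|V|; set m := #|non_emitters lam Em| => bin2_le cover_le.
have : (4 * #|forward_cover lam Em| <= 3 * 'C(n, 2) + 6 * n)%N by lia.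
rewrite -(ler_nat rat) natrD !natrM.
lra.
Qed.
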